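(* Let $P$ and $W$ be finite point sets in the plane with $|P|>1$, $|W|>1$ and $P\cup W$ in general position. For $p\in P$ let $V(p)$ be the (closed, convex, possibly unbounded polygonal) Voronoi region of $p$ in the Voronoi diagram of $W\cup\{p\}$. Then for distinct $p,q\in P$: (i) the set $\partial V(p)\cap\partial V(q)$ is either empty, or consists of at most two points, or is a single connected subset of a line (a segment or ray); and if $V(p)\cap V(q)\ne\varnothing$ then $\partial V(p)\cap\partial V(q)\neq\varnothing$. (ii) If $W\neq\{p,q\}$, then $p$ and $q$ are adjacent in $\mathrm{DG}^-(P,W)$ if and only if $\partial V(p)\cap\partial V(q)\neq\varnothing$.
   Context: Let $P$ (the vertices) and $W$ (the witnesses) be finite point sets in $\mathbb{R}^2$; $P$ and $W$ may share points. The witness Delaunay graph $\mathrm{DG}^-(P,W)$ is the graph with vertex set $P$ in which distinct $x,y\in P$ are adjacent if and only if there is an open disk containing no point of $W$ whose bounding circle passes through $x$ and $y$. General position of $P\cup W$ means that no three distinct points of $P\cup W$ are collinear and no four distinct points of $P\cup W$ are concyclic. For a finite set $Q$ and $a\in Q$, the Voronoi region of $a$ is $\{x\in\mathbb{R}^2: |x-a|\le |x-b| \text{ for all } b\in Q\}$. *)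

From Stdlib Require Import Reals List.
Open Scope R_scope.

Definition point : Type := (R * R)%type.

Definition dist2 (x y : point) : R :=
  (fst x - fst y) ^ 2 + (snd x - snd y) ^ 2.

Definition collinear (a b c : point) : Prop :=
  (fst b - fst a) * (snd c - snd a) - (snd b - snd a) * (fst c - fst a) = 0.

Definition concyclic (a b c d : point) : Prop :=
  exists (o : point) (r2 : R),
    dist2 a o = r2 /\ dist2 b o = r2 /\ dist2 c o = r2 /\ dist2 d o = r2.

Definition general_position (S : point -> Prop) : Prop :=
  (forall a b c, S a -> S b -> S c -> a <> b -> a <> c -> b <> c ->
     ~ collinear a b c) /\
  (forall a b c d, S a -> S b -> S c -> S d ->
     a <> b -> a <> c -> a <> d -> b <> c -> b <> d -> c <> d ->
     ~ concyclic a b c d).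

Definition voronoi_region (Q : list point) (a : point) (x : point) : Prop :=
  forall b, In b Q -> dist2 x a <= dist2 x b.

Definition Vreg (W : list point) (p : point) : point -> Prop :=
  voronoi_region (p :: W) p.

Definition boundary (S : point -> Prop) (x : point) : Prop :=
  forall eps, 0 < eps ->
    (exists y, S y /\ dist2 x y < eps) /\
    (exists z, ~ S z /\ dist2 x z < eps).

Definition witness_DG_adj (P W : list point) (x y : point) : Prop :=
  In x P /\ In y P /\ x <> y /\
  exists (c : point) (r2 : R), 0 < r2 /\
    dist2 x c = r2 /\ dist2 y c = r2 /\
    forall w, In w W -> ~ (dist2 w c < r2).

Definition line_pt (a d : point) (t : R) : point :=
  (fst a + t * fst d, snd a + t * snd d).

Definition connected_subset_of_line (S : point -> Prop) : Prop :=
  (exists a d : point, d <> (0, 0) /\ forall x, S x -> exists t, x = line_pt a d t) /\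
  (forall x y t, S x -> S y -> 0 <= t <= 1 ->
     S (line_pt x (fst y - fst x, snd y - snd x) t)).

From Stdlib Require Import Reals List Lra Psatz Classical.
Open Scope R_scope.

(* A point x lies on the boundary of V(p) iff x is in V(p) and some site w of W other than p
   is exactly as close to x as p.  Hence the common boundary of V(p) and V(q) lies on the
   bisector L of pq.  If p and q both belong to W it is the convex set V(p) ∩ L.  Otherwise
   each common boundary point x has a witness w outside {p, q}, off the line pq by general
   position, and |y - p| <= |y - w| confines the common boundary to a closed half-line of L
   ending at x; as three points of a line cannot all be extreme, there are at most two.
   A point of V(p) ∩ V(q) can be moved onto L inside both regions and then along L towards a
   site w0 outside {p, q} until some site becomes as close as p, which yields a common
   boundary point.  Finally, the empty circles through p and q are exactly the circles
   centred in V(p) ∩ V(q), which gives (ii). *)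

Definition vsub (a b : point) : point := (fst a - fst b, snd a - snd b).
Definition vdot (u v : point) : R := fst u * fst v + snd u * snd v.
Definition perp (p q : point) : point := (- (snd q - snd p), fst q - fst p).
Definition midpoint (p q : point) : point := ((fst p + fst q) / 2, (snd p + snd q) / 2).

Definition common_boundary (W : list point) (p q x : point) : Prop :=
  boundary (Vreg W p) x /\ boundary (Vreg W q) x.

Ltac expand := unfold dist2, vdot, vsub, perp, line_pt, midpoint; simpl.

Lemma dist2_sym x y : dist2 x y = dist2 y x.
Proof. expand; ring. Qed.

Lemma dist2_ge0 x y : 0 <= dist2 x y.
Proof. unfold dist2; apply Rplus_le_le_0_compat; apply pow2_ge_0. Qed.

Lemma dist2_xx x : dist2 x x = 0.
Proof. expand; ring. Qed.

Lemma dist2_eq0 x y : dist2 x y = 0 -> x = y.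
Proof.
  destruct x as [a b], y as [c d]; unfold dist2; simpl; intro H.
  pose proof (pow2_ge_0 (a - c)); pose proof (pow2_ge_0 (b - d)).
  assert (a - c = 0) by nra. assert (b - d = 0) by nra.
  f_equal; lra.
Qed.

Lemma dist2_gt0 x y : x <> y -> 0 < dist2 x y.
Proof.
  intro Hxy. destruct (Rle_lt_or_eq_dec _ _ (dist2_ge0 x y)) as [|E]; auto.
  exfalso; apply Hxy, dist2_eq0; auto.
Qed.

Lemma dist2_vdot x y : dist2 x y = vdot (vsub x y) (vsub x y).
Proof. expand; ring. Qed.

Lemma dist2_diff_shift x y a b :
  dist2 y a - dist2 y b = dist2 x a - dist2 x b + 2 * vdot (vsub y x) (vsub b a).
Proof. expand; ring. Qed.

Lemma dist2_diff_line_pt x u t a b :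
  dist2 (line_pt x u t) a - dist2 (line_pt x u t) b
  = dist2 x a - dist2 x b + 2 * t * vdot u (vsub b a).
Proof. expand; ring. Qed.

Lemma dist2_line_pt x u t : dist2 x (line_pt x u t) = t ^ 2 * vdot u u.
Proof. expand; ring. Qed.

Lemma dist2_diff_interp x y t a b :
  dist2 (line_pt x (vsub y x) t) a - dist2 (line_pt x (vsub y x) t) b
  = (1 - t) * (dist2 x a - dist2 x b) + t * (dist2 y a - dist2 y b).
Proof. expand; ring. Qed.

Lemma vdot_Cauchy_Schwarz u v : vdot u v ^ 2 <= vdot u u * vdot v v.
Proof.
  assert (E : vdot u u * vdot v v - vdot u v ^ 2 = (fst u * snd v - snd u * fst v) ^ 2)
    by (expand; ring).
  pose proof (pow2_ge_0 (fst u * snd v - snd u * fst v)); lra.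
Qed.

Lemma vdot_vsub_l y y' v : vdot (vsub y y') v = vdot y v - vdot y' v.
Proof. expand; ring. Qed.

Lemma vdot_perp_decomp p q u v :
  dist2 q p * vdot u v
  = vdot u (vsub q p) * vdot v (vsub q p) + vdot u (perp p q) * vdot v (perp p q).
Proof. expand; ring. Qed.

Lemma collinear_perp p q w : collinear p q w <-> vdot (perp p q) (vsub w p) = 0.
Proof. unfold collinear; expand; split; intro; lra. Qed.

Lemma bisector_vdot x y p q : dist2 x p = dist2 x q -> dist2 y p = dist2 y q ->
  vdot (vsub y x) (vsub q p) = 0.
Proof. intros Hx Hy. pose proof (dist2_diff_shift x y p q). lra. Qed.

Lemma bisector_line_pt x p q : p <> q -> dist2 x p = dist2 x q ->
  exists t, x = line_pt (midpoint p q) (perp p q) t.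
Proof.
  intros Hpq Hx. set (D := dist2 q p). set (v := vsub x (midpoint p q)).
  assert (HD : 0 < D) by (apply dist2_gt0; auto).
  assert (Hv : vdot v (vsub q p) = 0).
  { apply bisector_vdot with (x := midpoint p q); auto. expand; field. }
  exists (vdot v (perp p q) / D).
  assert (E1 : D * fst v = vdot v (vsub q p) * fst (vsub q p) + vdot v (perp p q) * fst (perp p q))
    by (unfold D, v; expand; ring).
  assert (E2 : D * snd v = vdot v (vsub q p) * snd (vsub q p) + vdot v (perp p q) * snd (perp p q))
    by (unfold D, v; expand; ring).
  rewrite Hv in E1, E2. destruct x as [x1 x2]. unfold line_pt, v in *; simpl in *. f_equal.
  - apply (Rmult_eq_reg_l D); [|lra]. field_simplify; [|lra]. nra.
  - apply (Rmult_eq_reg_l D); [|lra]. field_simplify; [|lra]. nra.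
Qed.

Lemma bisector_eq_of_perp y y' p q : p <> q ->
  dist2 y p = dist2 y q -> dist2 y' p = dist2 y' q ->
  vdot (vsub y y') (perp p q) = 0 -> y = y'.
Proof.
  intros Hpq Hy Hy' Ht. apply dist2_eq0.
  pose proof (vdot_perp_decomp p q (vsub y y') (vsub y y')) as E.
  rewrite (bisector_vdot y' y p q Hy' Hy), Ht, <- dist2_vdot in E.
  pose proof (dist2_gt0 q p (not_eq_sym Hpq)). nra.
Qed.
Lemma dist2_lt_near x a b : dist2 x a < dist2 x b ->
  exists eps, 0 < eps /\ forall y, dist2 x y < eps -> dist2 y a < dist2 y b.
Proof.
  intro Hab. set (k := dist2 x b - dist2 x a). set (C := vdot (vsub a b) (vsub a b)).
  assert (HC : 0 <= C) by (unfold C; rewrite <- dist2_vdot; apply dist2_ge0).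
  assert (Hk : 0 < k) by (unfold k; lra).
  exists (k ^ 2 / (4 * C + 1)). split.
  { apply Rdiv_lt_0_compat; nra. }
  intros y Hy. set (n := vdot (vsub y x) (vsub y x)).
  assert (Hn : 0 <= n) by (unfold n; rewrite <- dist2_vdot; apply dist2_ge0).
  assert (Hnk : n * (4 * C + 1) < k ^ 2).
  { rewrite dist2_sym, dist2_vdot in Hy; fold n in Hy.
    apply (Rmult_lt_compat_r (4 * C + 1)) in Hy; [|lra].
    unfold Rdiv in Hy; rewrite Rmult_assoc, Rinv_l, Rmult_1_r in Hy; lra. }
  set (s := vdot (vsub y x) (vsub a b)).
  assert (CS : s ^ 2 <= n * C) by apply vdot_Cauchy_Schwarz.
  assert (Hs : (2 * s) ^ 2 < k ^ 2) by nra.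
  pose proof (dist2_diff_shift x y b a) as E. fold s k in E.
  destruct (Rlt_or_le (- k) (2 * s)); [lra | nra].
Qed.

Lemma near_all (A : Type) (P : A -> point -> Prop) (x : point) (l : list A) :
  (forall w, In w l -> exists eps, 0 < eps /\ forall y, dist2 x y < eps -> P w y) ->
  exists eps, 0 < eps /\ forall y, dist2 x y < eps -> forall w, In w l -> P w y.
Proof.
  induction l as [|c l IH]; intro Hl.
  - exists 1; split; [lra | intros y _ w []].
  - destruct IH as [e1 [He1 H1]]; [intros w Hw; apply Hl; right; auto|].
    destruct (Hl c (or_introl eq_refl)) as [e2 [He2 H2]].
    exists (Rmin e1 e2); split; [apply Rmin_pos; auto|].
    intros y Hy w [<-|Hw].
    + apply H2. eapply Rlt_le_trans; [exact Hy | apply Rmin_r].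
    + apply H1; auto. eapply Rlt_le_trans; [exact Hy | apply Rmin_l].
Qed.

Lemma Vreg_of_W W p x : (forall b, In b W -> dist2 x p <= dist2 x b) -> Vreg W p x.
Proof. intros H b [<-|Hb]; [lra | auto]. Qed.

Lemma Vreg_center W p : Vreg W p p.
Proof. apply Vreg_of_W; intros b _. rewrite dist2_xx; apply dist2_ge0. Qed.

Lemma Vreg_bisector W p q x : Vreg W p x -> dist2 x p = dist2 x q -> Vreg W q x.
Proof. intros Hx E. apply Vreg_of_W; intros b Hb. rewrite <- E; apply Hx; right; auto. Qed.

Lemma Vreg_convex W p x y t : Vreg W p x -> Vreg W p y -> 0 <= t <= 1 ->
  Vreg W p (line_pt x (vsub y x) t).
Proof.
  intros Hx Hy Ht b Hb. pose proof (dist2_diff_interp x y t p b) as E.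
  specialize (Hx b Hb); specialize (Hy b Hb). nra.
Qed.

Lemma Vreg_closed W p x :
  (forall eps, 0 < eps -> exists y, Vreg W p y /\ dist2 x y < eps) -> Vreg W p x.
Proof.
  intros Hcl b Hb. apply Rnot_lt_le; intro Hlt.
  destruct (dist2_lt_near x b p Hlt) as [eps [He Hnear]].
  destruct (Hcl eps He) as [y [Hy Hxy]].
  specialize (Hy b Hb). specialize (Hnear y Hxy). lra.
Qed.

Lemma Vreg_interior W p x : (forall w, In w W -> w <> p -> dist2 x p < dist2 x w) ->
  exists eps, 0 < eps /\ forall y, dist2 x y < eps -> Vreg W p y.
Proof.
  intro Hint.
  destruct (near_all point (fun w y => dist2 y p <= dist2 y w) x W) as [eps [He Hnear]].
  - intros w Hw. destruct (classic (w = p)) as [->|Hwp].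
    + exists 1; split; [lra | intros; lra].
    + destruct (dist2_lt_near x p w (Hint w Hw Hwp)) as [eps [He Hnear]].
      exists eps; split; auto. intros y Hy; left; auto.
  - exists eps; split; auto. intros y Hy; apply Vreg_of_W; auto.
Qed.

Lemma boundary_Vreg W p x : boundary (Vreg W p) x <->
  Vreg W p x /\ exists w, In w W /\ w <> p /\ dist2 x w = dist2 x p.
Proof.
  split.
  - intro Hbd.
    assert (Hx : Vreg W p x).
    { apply Vreg_closed; intros eps He. destruct (Hbd eps He) as [[y Hy] _]; eauto. }
    split; auto. apply NNPP; intro Hnone.
    destruct (Vreg_interior W p x) as [eps [He Hnear]].
    { intros w Hw Hwp. destruct (Hx w (or_intror Hw)) as [|E]; auto.
      exfalso; apply Hnone; eauto. }
    destruct (Hbd eps He) as [_ [z [Hz Hxz]]]. auto.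
  - intros [Hx [w [Hw [Hwp Ew]]]] eps He. split.
    { exists x; split; auto. rewrite dist2_xx; auto. }
    (* Pushing [x] slightly in the direction [w - p] leaves V(p). *)
    set (D := dist2 w p). assert (HD : 0 < D) by (apply dist2_gt0; auto).
    set (s := eps / (eps + D + 1)).
    assert (Hs : s * (eps + D + 1) = eps) by (unfold s; field; lra).
    assert (Hs0 : 0 < s) by (unfold s; apply Rdiv_lt_0_compat; lra).
    exists (line_pt x (vsub w p) s). split.
    + intro Hz. specialize (Hz w (or_intror Hw)).
      pose proof (dist2_diff_line_pt x (vsub w p) s w p) as E.
      replace (vdot (vsub w p) (vsub p w)) with (- D) in E by (unfold D; expand; ring).
      nra.
    + rewrite dist2_line_pt, <- dist2_vdot. fold D. nra.
Qed.

Lemma common_boundary_bisector W p q x : common_boundary W p q x -> dist2 x p = dist2 x q.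
Proof.
  intros [Hp Hq]. apply boundary_Vreg in Hp as [Vp [w [Hw [_ Ew]]]].
  apply boundary_Vreg in Hq as [Vq [w' [Hw' [_ Ew']]]].
  specialize (Vp w' (or_intror Hw')); specialize (Vq w (or_intror Hw)). lra.
Qed.

Lemma common_boundary_Vreg W p q x : common_boundary W p q x -> Vreg W p x.
Proof. intros [Hp _]; apply boundary_Vreg in Hp; tauto. Qed.

Lemma common_boundary_witness W p q x : common_boundary W p q x -> ~ (In p W /\ In q W) ->
  exists w, In w W /\ w <> p /\ w <> q /\ dist2 x w = dist2 x p.
Proof.
  intros Hx Hpq. pose proof (common_boundary_bisector W p q x Hx) as L.
  destruct Hx as [Hp Hq].
  apply boundary_Vreg in Hp as [_ [w [Hw [Hwp Ew]]]].
  apply boundary_Vreg in Hq as [_ [w' [Hw' [Hw'q Ew']]]].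
  destruct (classic (w = q)) as [->|Hwq]; [|exists w; auto].
  destruct (classic (w' = p)) as [->|Hwp']; [tauto|].
  exists w'; repeat split; auto; lra.
Qed.

Lemma common_boundary_of_mem W p q x : In p W -> In q W -> p <> q ->
  Vreg W p x -> dist2 x p = dist2 x q -> common_boundary W p q x.
Proof.
  intros HpW HqW Hpq Hx L. split; apply boundary_Vreg.
  - split; auto. exists q; auto.
  - split; [apply Vreg_bisector with p; auto|]. exists p; split; [|split]; auto; lra.
Qed.

Lemma common_boundary_line W p q : In p W -> In q W -> p <> q ->
  connected_subset_of_line (common_boundary W p q).
Proof.
  intros HpW HqW Hpq. split.
  - exists (midpoint p q), (perp p q). split.
    + intro H0. injection H0 as H1 H2. apply Hpq.
      destruct p, q; simpl in *; f_equal; lra.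
    + intros x Hx. apply bisector_line_pt; auto. apply (common_boundary_bisector W); auto.
  - intros x y t Hx Hy Ht. apply common_boundary_of_mem; auto.
    + apply Vreg_convex; auto; apply (common_boundary_Vreg W p q); auto.
    + pose proof (dist2_diff_interp x y t p q) as E.
      rewrite (common_boundary_bisector W p q x), (common_boundary_bisector W p q y) in E;
        auto. change (fst y - fst x, snd y - snd x) with (vsub y x). lra.
Qed.

Definition extreme_on {A : Type} (S : A -> Prop) (t : A -> R) (x : A) : Prop :=
  (forall y, S y -> t x <= t y) \/ (forall y, S y -> t y <= t x).

Lemma extreme_on_of_sign {A : Type} (S : A -> Prop) (t : A -> R) (x : A) (c : R) :
  c <> 0 -> (forall y, S y -> 0 <= (t y - t x) * c) -> extreme_on S t x.
Proof.
  intros Hc Hy. destruct (Rdichotomy _ _ Hc) as [Hneg|Hpos].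
  - right; intros y Sy; specialize (Hy y Sy); nra.
  - left; intros y Sy; specialize (Hy y Sy); nra.
Qed.

(* Two of three extreme points would both be minima or both maxima. *)
Lemma no_three_extreme {A : Type} (S : A -> Prop) (t : A -> R) x1 x2 x3 :
  S x1 -> S x2 -> S x3 -> t x1 <> t x2 -> t x1 <> t x3 -> t x2 <> t x3 ->
  extreme_on S t x1 -> extreme_on S t x2 -> extreme_on S t x3 -> False.
Proof.
  intros S1 S2 S3 N12 N13 N23 [E1|E1] [E2|E2] [E3|E3];
  pose proof (E1 x2 S2); pose proof (E1 x3 S3); pose proof (E2 x1 S1);
  pose proof (E2 x3 S3); pose proof (E3 x1 S1); pose proof (E3 x2 S2); lra.
Qed.

Lemma at_most_two_of_no_three {A : Type} (a0 : A) (S : A -> Prop) :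
  (forall x1 x2 x3, S x1 -> S x2 -> S x3 -> x1 <> x2 -> x1 <> x3 -> x2 <> x3 -> False) ->
  exists a b, forall x, S x -> x = a \/ x = b.
Proof.
  intro Hno3.
  destruct (classic (exists a, S a)) as [[a Sa]|Hempty];
    [|exists a0, a0; intros x Sx; exfalso; eauto].
  destruct (classic (exists b, S b /\ b <> a)) as [[b [Sb Hba]]|Hone];
    [|exists a, a; intros x Sx; left; apply NNPP; eauto].
  exists a, b; intros x Sx. apply NNPP; intro Hx.
  apply (Hno3 a b x); auto; intro; subst; tauto.
Qed.

Lemma common_boundary_extreme W p q x : p <> q -> ~ (In p W /\ In q W) ->
  (forall w, In w W -> w <> p -> w <> q -> ~ collinear p q w) ->
  common_boundary W p q x -> extreme_on (common_boundary W p q) (fun y => vdot y (perp p q)) x.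
Proof.
  intros Hpq Hnot Hgp Hx.
  destruct (common_boundary_witness W p q x Hx Hnot) as [w [Hw [Hwp [Hwq Ew]]]].
  apply extreme_on_of_sign with (c := vdot (vsub p w) (perp p q)).
  - intro H0. apply (Hgp w Hw Hwp Hwq), collinear_perp.
    replace (vdot (perp p q) (vsub w p)) with (- vdot (vsub p w) (perp p q))
      by (expand; ring). lra.
  - intros y Hy. rewrite <- vdot_vsub_l.
    pose proof (vdot_perp_decomp p q (vsub y x) (vsub p w)) as E.
    rewrite (bisector_vdot x y p q (common_boundary_bisector W p q x Hx)
               (common_boundary_bisector W p q y Hy)) in E.
    pose proof (dist2_diff_shift x y w p) as Shift.
    pose proof (common_boundary_Vreg W p q y Hy w (or_intror Hw)).
    pose proof (dist2_gt0 q p (not_eq_sym Hpq)). nra.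
Qed.

Lemma common_boundary_at_most_two W p q : p <> q -> ~ (In p W /\ In q W) ->
  (forall w, In w W -> w <> p -> w <> q -> ~ collinear p q w) ->
  exists a b, forall x, common_boundary W p q x -> x = a \/ x = b.
Proof.
  intros Hpq Hnot Hgp. apply (at_most_two_of_no_three (0, 0)).
  intros x1 x2 x3 H1 H2 H3 N12 N13 N23.
  assert (Hinj : forall y y', common_boundary W p q y -> common_boundary W p q y' -> y <> y' ->
            vdot y (perp p q) <> vdot y' (perp p q)).
  { intros y y' Hy Hy' Nyy' E. apply Nyy', (bisector_eq_of_perp y y' p q); auto;
      try apply (common_boundary_bisector W); auto.
    rewrite vdot_vsub_l; lra. }
  apply (no_three_extreme (common_boundary W p q) (fun y => vdot y (perp p q)) x1 x2 x3);
    auto; apply common_boundary_extreme; auto.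
Qed.

Lemma affine_nonneg_between a b t t' : 0 <= a -> 0 <= a + b * t -> 0 <= t' <= t ->
  0 <= a + b * t'.
Proof. intros Ha Hat Ht. destruct (Rle_or_lt 0 b); nra. Qed.

Lemma first_hit (A : Type) (a b : A -> R) (l : list A) :
  (forall w, In w l -> 0 <= a w) -> (exists w0, In w0 l /\ b w0 < 0) ->
  exists t, 0 <= t /\ (forall w, In w l -> 0 <= a w + b w * t) /\
    exists w, In w l /\ b w < 0 /\ a w + b w * t = 0.
Proof.
  induction l as [|c l IH]; intros Ha [w0 [Hw0 Hb0]]; [destruct Hw0|].
  assert (Hac : 0 <= a c) by (apply Ha; left; auto).
  assert (Hal : forall w, In w l -> 0 <= a w) by (intros w Hw; apply Ha; right; auto).
  destruct (classic (exists w1, In w1 l /\ b w1 < 0)) as [Hl|Hl].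
  - destruct (IH Hal Hl) as [t [Ht [Hall [w [Hw [Hbw Haw]]]]]].
    destruct (Rle_or_lt 0 (b c)) as [Hbc|Hbc].
    + exists t; split; auto. split; [intros w' [<-|Hw']; [nra | auto]|].
      exists w; split; [right|]; auto.
    + set (tc := a c / - b c).
      assert (Htc : a c + b c * tc = 0) by (unfold tc; field; lra).
      assert (Htc0 : 0 <= tc) by (unfold tc; apply Rle_mult_inv_pos; lra).
      destruct (Rle_or_lt t tc) as [Htt|Htt].
      * exists t; split; auto. split.
        -- intros w' [<-|Hw']; [apply affine_nonneg_between with tc|]; auto; lra.
        -- exists w; split; [right|]; auto.
      * exists tc; split; auto. split; [|exists c; split; [left|]; auto].
        intros w' [<-|Hw']; [lra|].
        apply affine_nonneg_between with t; auto; lra.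
  - destruct Hw0 as [<-|Hw0]; [|exfalso; eauto].
    set (tc := a c / - b c).
    assert (Htc : a c + b c * tc = 0) by (unfold tc; field; lra).
    assert (Htc0 : 0 <= tc) by (unfold tc; apply Rle_mult_inv_pos; lra).
    exists tc; split; auto. split; [|exists c; split; [left|]; auto].
    intros w' [<-|Hw']; [lra|].
    destruct (Rle_or_lt 0 (b w')); [specialize (Hal w' Hw'); nra | exfalso; eauto].
Qed.

Lemma Vreg_meet_bisector W p q x : p <> q -> Vreg W p x -> Vreg W q x ->
  exists z, Vreg W p z /\ Vreg W q z /\ dist2 z p = dist2 z q.
Proof.
  (* [dist2 _ q - dist2 _ p] changes sign on the segment from [x] to [q], which stays in V(q). *)
  assert (Hor : forall p q x, p <> q -> Vreg W q x -> dist2 x p <= dist2 x q ->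
            exists z, Vreg W q z /\ dist2 z p = dist2 z q).
  { clear p q x. intros p q x Hpq Hx Hle.
    set (G := dist2 x q - dist2 x p). set (D := dist2 q p).
    assert (HD : 0 < D) by (apply dist2_gt0; auto).
    set (t := G / (G + D)).
    assert (Ht : t * (G + D) = G) by (unfold t, G; field; lra).
    assert (Ht0 : 0 <= t) by (unfold t, G; apply Rle_mult_inv_pos; lra).
    exists (line_pt x (vsub q x) t). split.
    - apply Vreg_convex; auto; [apply Vreg_center | split; [|unfold G in *]; nra].
    - pose proof (dist2_diff_interp x q t q p) as E. rewrite dist2_xx in E.
      fold G D in E. lra. }
  intros Hpq Hp Hq. destruct (Rle_or_lt (dist2 x p) (dist2 x q)) as [Hle|Hlt].
  - destruct (Hor p q x) as [z [Hz E]]; auto.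
    exists z; repeat split; auto. apply Vreg_bisector with q; auto.
  - destruct (Hor q p x) as [z [Hz E]]; auto; [lra|].
    exists z; repeat split; auto. apply Vreg_bisector with p; auto.
Qed.

Lemma exists_other_point (W : list point) p q :
  (exists a b, In a W /\ In b W /\ a <> b) -> ~ (In p W /\ In q W) ->
  exists w, In w W /\ w <> p /\ w <> q.
Proof.
  intros [a [b [Ha [Hb Hab]]]] Hnot.
  destruct (classic (a = p)) as [->|Hap]; [|destruct (classic (a = q)) as [->|Haq]].
  - exists b; repeat split; auto. intros ->; tauto.
  - exists b; repeat split; auto. intros ->; tauto.
  - exists a; auto.
Qed.

Lemma common_boundary_slide W p q z u w0 :
  Vreg W p z -> dist2 z p = dist2 z q -> vdot u (vsub q p) = 0 ->
  In w0 W -> vdot u (vsub p w0) < 0 -> exists x, common_boundary W p q x.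
Proof.
  intros Hz Lz Hu Hw0 Hdir.
  destruct (first_hit point (fun w => dist2 z w - dist2 z p)
              (fun w => 2 * vdot u (vsub p w)) W)
    as [t [Ht [Hall [w [Hw [Hbw Haw]]]]]].
  { intros w Hw. pose proof (Hz w (or_intror Hw)). lra. }
  { exists w0; split; auto; lra. }
  set (y := line_pt z u t).
  assert (Ey : forall w, dist2 y w - dist2 y p = dist2 z w - dist2 z p + 2 * vdot u (vsub p w) * t).
  { intro w'. unfold y; rewrite dist2_diff_line_pt; ring. }
  assert (Ly : dist2 y p = dist2 y q).
  { pose proof (Ey q) as E.
    replace (vdot u (vsub p q)) with (- vdot u (vsub q p)) in E by (expand; ring).
    rewrite Hu in E. lra. }
  assert (Vy : Vreg W p y).
  { apply Vreg_of_W; intros b Hb. pose proof (Ey b); pose proof (Hall b Hb). lra. }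
  assert (Hwp : w <> p).
  { intros ->. replace (vdot u (vsub p p)) with 0 in Hbw by (expand; ring). lra. }
  assert (Hwq : w <> q).
  { intros ->. replace (vdot u (vsub p q)) with (- vdot u (vsub q p)) in Hbw
      by (expand; ring). lra. }
  assert (Ew : dist2 y w = dist2 y p) by (pose proof (Ey w); lra).
  exists y; split; apply boundary_Vreg.
  - split; [|exists w]; auto.
  - split; [apply Vreg_bisector with p; auto | exists w; repeat split; auto; lra].
Qed.

Lemma common_boundary_exists W p q : p <> q ->
  (exists a b, In a W /\ In b W /\ a <> b) ->
  (forall w, In w W -> w <> p -> w <> q -> ~ collinear p q w) ->
  (exists x, Vreg W p x /\ Vreg W q x) -> exists x, common_boundary W p q x.
Proof.
  intros Hpq HW Hgp [x [Hpx Hqx]].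
  destruct (Vreg_meet_bisector W p q x Hpq Hpx Hqx) as [z [Vp [Vq Lz]]].
  destruct (classic (In p W /\ In q W)) as [[HpW HqW]|Hnot].
  { exists z; apply common_boundary_of_mem; auto. }
  destruct (exists_other_point W p q HW Hnot) as [w0 [Hw0 [Hw0p Hw0q]]].
  assert (Hc : vdot (perp p q) (vsub p w0) <> 0).
  { intro H0. apply (Hgp w0 Hw0 Hw0p Hw0q), collinear_perp.
    replace (vdot (perp p q) (vsub w0 p)) with (- vdot (perp p q) (vsub p w0))
      by (expand; ring). lra. }
  assert (Hperp : vdot (perp p q) (vsub q p) = 0) by (expand; ring).
  destruct (Rdichotomy _ _ Hc) as [Hneg|Hpos].
  - apply common_boundary_slide with z (perp p q) w0; auto.
  - set (u := vsub (0, 0) (perp p q)).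
    apply common_boundary_slide with z u w0; auto; unfold u.
    + replace (vdot (vsub (0, 0) (perp p q)) (vsub q p)) with (- vdot (perp p q) (vsub q p))
        by (expand; ring). lra.
    + replace (vdot (vsub (0, 0) (perp p q)) (vsub p w0)) with (- vdot (perp p q) (vsub p w0))
        by (expand; ring). lra.
Qed.

Lemma witness_DG_adj_iff P W p q : In p P -> In q P -> p <> q ->
  (exists a b, In a W /\ In b W /\ a <> b) ->
  (forall w, In w W -> w <> p -> w <> q -> ~ collinear p q w) ->
  witness_DG_adj P W p q <-> exists x, common_boundary W p q x.
Proof.
  intros Hp Hq Hpq HW Hgp. split.
  - intros [_ [_ [_ [c [r2 [_ [Ep [Eq Hempty]]]]]]]].
    apply common_boundary_exists; auto. exists c.
    split; apply Vreg_of_W; intros b Hb; specialize (Hempty b Hb);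
      rewrite dist2_sym, (dist2_sym c b); lra.
  - intros [x Hx]. pose proof (common_boundary_bisector W p q x Hx) as L.
    pose proof (common_boundary_Vreg W p q x Hx) as Vx.
    assert (Hr : 0 < dist2 p x).
    { apply dist2_gt0. intros <-. apply Hpq, dist2_eq0.
      rewrite <- L, dist2_xx; auto. }
    repeat split; auto. exists x, (dist2 p x). repeat split; auto.
    + rewrite dist2_sym, <- L, dist2_sym; auto.
    + intros w Hw. pose proof (Vx w (or_intror Hw)).
      rewrite (dist2_sym w x), (dist2_sym p x). lra.
Qed.

Theorem mainTheorem4 (P W : list point) :
  (exists a b, In a P /\ In b P /\ a <> b) ->
  (exists a b, In a W /\ In b W /\ a <> b) ->
  general_position (fun x => In x P \/ In x W) ->
  forall p q, In p P -> In q P -> p <> q ->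
    ( ( (forall x, ~ (boundary (Vreg W p) x /\ boundary (Vreg W q) x))
      \/ (exists a b, forall x, boundary (Vreg W p) x /\ boundary (Vreg W q) x ->
                                x = a \/ x = b)
      \/ connected_subset_of_line
           (fun x => boundary (Vreg W p) x /\ boundary (Vreg W q) x) )
    /\ ((exists x, Vreg W p x /\ Vreg W q x) ->
        exists x, boundary (Vreg W p) x /\ boundary (Vreg W q) x) )
    /\ ( ~ (forall x, In x W <-> x = p \/ x = q) ->
         (witness_DG_adj P W p q <->
          exists x, boundary (Vreg W p) x /\ boundary (Vreg W q) x) ).
Proof.
  intros _ HW [Hgp _] p q Hp Hq Hpq.
  assert (Hgp_pq : forall w, In w W -> w <> p -> w <> q -> ~ collinear p q w)
    by (intros w Hw Hwp Hwq; apply Hgp; auto).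
  split; [split|].
  - destruct (classic (In p W /\ In q W)) as [[HpW HqW]|Hnot].
    + right; right; apply common_boundary_line; auto.
    + right; left; apply common_boundary_at_most_two; auto.
  - apply common_boundary_exists; auto.
  - intros _; apply witness_DG_adj_iff; auto.
Qed.
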